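(* Let $S$ be a numerical semigroup and $G=G(S)$. Let $y$ be a nonloopy vertex of $G$. Then there is no neighbor $z$ of $y$ in $G$ with $z-y\in S^*$.
   Context: A numerical semigroup is a subset $S\subseteq\mathbb N$ containing $0$, closed under addition, with finite complement; $S^*=S\setminus\{0\}$, $m=\min S^*$, $X=\{s\in S^*: s-m\notin S\}$. The graph $G(S)$ has edge set all subsets $\{x,y\}\subseteq X$ ($x=y$ allowed) with $x+y\in X$, and vertex set the endvertices of these edges. A vertex $y$ is nonloopy if $2y\notin X$; $z$ is a neighbor of $y$ if $z\in X$ and $y+z\in X$. *)

From mathcomp Require Import all_boot.
From Stdlib Require Import ClassicalEpsilon.
Set Implicit Arguments. Unset Strict Implicit. Unset Printing Implicit Defensive.

Definition numerical_semigroup (S : pred nat) : Prop :=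
  [/\ S 0,
      (forall x y, S x -> S y -> S (x + y)) &
      (exists N, forall n, N <= n -> S n)].

Definition Sstar (S : pred nat) (x : nat) : Prop := S x /\ x != 0.

(* m = min S^* (chosen by Hilbert's epsilon; for a numerical semigroup
   this is the unique least nonzero element). *)
Definition mult (S : pred nat) : nat :=
  epsilon (inhabits 0)
    (fun m => Sstar S m /\ forall s, Sstar S s -> m <= s).

(* X = { s in S^* : s - m notin S }  (s >= m for s in S^*, so nat
   subtraction is exact here) *)
Definition inX (S : pred nat) (s : nat) : Prop :=
  Sstar S s /\ ~ S (s - mult S).

(* vertex set of G(S): endpoints of edges {x,y} of X (x = y allowed)
   with x + y in X *)
Definition vertexG (S : pred nat) (y : nat) : Prop :=
  inX S y /\ exists x, inX S x /\ inX S (x + y).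

Definition nonloopy (S : pred nat) (y : nat) : Prop := ~ inX S (2 * y).

Definition neighbor (S : pred nat) (y z : nat) : Prop :=
  inX S z /\ inX S (y + z).

From mathcomp Require Import all_boot.
From mathcomp Require Import zify.
From Stdlib Require Import ClassicalEpsilon.

Set Implicit Arguments.
Unset Strict Implicit.

(* The elements of S^* outside X (those s with s - m in S) are stable under
   adding elements of S.  For a nonloopy vertex y, 2y is such an element, so
   if z - y were in S then y + z = 2y + (z - y) could not lie in X. *)

Section NumericalSemigroup.

Variable S : pred nat.
Hypothesis S_num : numerical_semigroup S.

Lemma S_add x y : S x -> S y -> S (x + y).
Proof. by case: S_num => _ addS _; apply: addS. Qed.

Lemma mult_spec : Sstar S (mult S) /\ forall s, Sstar S s -> mult S <= s.
Proof.
apply: (epsilon_spec (inhabits 0) (fun m => Sstar S m /\ forall s, Sstar S s -> m <= s)).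
case: S_num => _ _ [N SN].
have ex_nonzero : exists n, S n && (n != 0) by exists N.+1; rewrite SN.
case: (ex_minnP ex_nonzero) => m /andP [Sm m_neq0] m_min.
exists m; split=> [//|s [Ss s_neq0]].
by apply: m_min; rewrite Ss s_neq0.
Qed.

Lemma mult_leq s : Sstar S s -> mult S <= s.
Proof. by case: mult_spec => _; apply. Qed.

Lemma Sstar_double y : Sstar S y -> Sstar S (2 * y).
Proof.
move=> [Sy y_neq0]; rewrite mul2n -addnn.
split; first exact: S_add.
by rewrite addnn double_eq0.
Qed.

Lemma not_inX_addr s w : Sstar S s -> ~ inX S s -> S w -> ~ inX S (s + w).
Proof.
move=> s_star s_notX Sw [_ Ssw_m]; apply: Ssw_m.
have s_m : S (s - mult S) by apply/negPn/negP => /negP nS; exact: s_notX (conj s_star nS).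
have m_le_s := mult_leq s_star.
have -> : s + w - mult S = (s - mult S) + w by lia.
exact: S_add.
Qed.

End NumericalSemigroup.

Theorem lemma4p12 (S : pred nat) (y : nat) :
  numerical_semigroup S -> vertexG S y -> nonloopy S y ->
  ~ (exists z, neighbor S y z /\ y < z /\ Sstar S (z - y)).
Proof.
move=> S_num [[y_star _] _] y_nonloopy [z [[_ yz_X] [lt_yz [S_zy _]]]].
rewrite (_ : y + z = 2 * y + (z - y)) in yz_X; last by lia.
exact: (not_inX_addr S_num (Sstar_double S_num y_star) y_nonloopy S_zy yz_X).
Qed.
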